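(* Suppose $L=cW$ with $c\in\mathbb{C}\setminus\{0\}$ and $W\in\mathbb{C}^{p\times p}$ unitary. Let $\mathcal A\in\mathbb{C}_p^{I_1\times\cdots\times I_N}$. For each $n$ let $\mathcal A_{(n)}=\mathcal U_n*\Sigma_n*\mathcal V_n^H$ be the t-SVD of the mode-$n$ unfolding, let $R_n$ be the t-rank of $\mathcal A_{(n)}$, let $\sigma^{(n)}_i=\|\Sigma_n(i,i)\|$ (Frobenius norm of the $i$-th diagonal tubal scalar), and fix integers $1\le I_n'\le I_n$. Let $\overline{\mathcal U}_n\in\mathbb{C}_p^{I_n\times I_n'}$ consist of the first $I_n'$ columns of $\mathcal U_n$, and define the truncated Hot-SVD approximation $$\widehat{\mathcal A}=\widetilde{\mathcal S}*_1\overline{\mathcal U}_1\cdots*_N\overline{\mathcal U}_N,\qquad \widetilde{\mathcal S}=\mathcal A*_1\overline{\mathcal U}_1^H\cdots*_N\overline{\mathcal U}_N^H\in\mathbb{C}_p^{I_1'\times\cdots\times I_N'}.$$ Then $$\|\mathcal A-\widehat{\mathcal A}\|\le\sqrt{\sum_{n=1}^N\sum_{i=I_n'+1}^{R_n}(\sigma^{(n)}_i)^2}\le\sqrt N\,\big\|\mathcal A-\mathcal S*_1\mathcal W_1\cdots*_N\mathcal W_N\big\|$$ for every $\mathcal S\in\mathbb{C}_p^{I_1'\times\cdots\times I_N'}$ and all $\mathcal W_n\in\mathbb{C}_p^{I_n\times I_n'}$ with $\mathcal W_n^H*\mathcal W_n=\mathcal I_{I_n'}$ (empty sums are $0$). In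 particular the bound holds with $\sqrt N\|\mathcal A-\mathcal A^*\|$, where $\mathcal A^*$ is an optimal solution of this orthogonal low-tubal-rank approximation problem.
   Context: Fix an integer $p\ge1$ and an invertible linear map $L:\mathbb{C}^p\to\mathbb{C}^p$. A tubal scalar is an element of $\mathbb{C}_p:=\mathbb{C}^p$. The tensor-tensor product of tubal scalars is $\mathbf a*\mathbf b=L^{-1}(L(\mathbf a)\odot L(\mathbf b))$, where $\odot$ is the componentwise product. A tubal matrix $\mathcal A\in\mathbb{C}_p^{I\times J}$ is an $I\times J$ array of tubal scalars; its $k$-th frontal slice $\mathcal A^{(k)}$ has entries $\mathcal A(i,j)^{(k)}$, and $L(\mathcal A)$ is obtained by applying $L$ to every entry. $(\mathcal A*\mathcal B)(i,k)=\sum_j\mathcal A(i,j)*\mathcal B(j,k)$; equivalently $L(\mathcal A*\mathcal B)^{(k)}=L(\mathcal A)^{(k)}L(\mathcal B)^{(k)}$. The identity $\mathcal I_I$ has $L(\mathcal I_I)^{(k)}$ equal to the $I\times I$ identity matrix for all $k$. The Hermitian transpose is defined by $L(\mathcal A^H)^{(k)}=(L(\mathcal A)^{(k)})^H$; $\mathcal A\in\mathbb{C}_p^{I\times I}$ is unitary if $\mathcal A*\mathcal A^H=\mathcal A^H*\mathcal A=\mathcal I_I$. A t-SVD of $\mathcal A\in\mathbb{C}_p^{I\times J}$ is the factorization $\mathcal A=\mathcal U*\Sigma*\mathcal V^H$ obtained by taking, for each $k$, a matrix SVD $L(\mathcal A)^{(k)}=U_kS_kV_k^H$ (with $U_k,V_k$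 unitary, $S_k$ rectangular diagonal with singular values in nonincreasing order) and defining $L(\mathcal U)^{(k)}=U_k$, $L(\Sigma)^{(k)}=S_k$, $L(\mathcal V)^{(k)}=V_k$. The t-rank is the number of nonzero tubal scalars $\Sigma(i,i)$. A tubal tensor $\mathcal A\in\mathbb{C}_p^{I_1\times\cdots\times I_N}$ is an $N$-way array of tubal scalars; its mode-$n$ unfolding $\mathcal A_{(n)}\in\mathbb{C}_p^{I_n\times\prod_{m\neq n}I_m}$ has $\mathcal A_{(n)}(i_n,j)=\mathcal A(i_1,\dots,i_N)$ with $j=1+\sum_{k\neq n}(i_k-1)\prod_{m<k,\,m\neq n}I_m$. The $n$-mode product is $(\mathcal A*_n\mathcal U)(i_1,\dots,i_{n-1},j,i_{n+1},\dots,i_N)=\sum_{i_n}\mathcal A(i_1,\dots,i_N)*\mathcal U(j,i_n)$; repeated products are evaluated left to right. $\|\cdot\|$ is the Frobenius norm (Euclidean norm of all complex entries of the underlying array). *)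

(* Complex numbers are modelled by an arbitrary
   numClosedFieldType C (e.g. R[i] for a real closed / real field R). *)
From HB Require Import structures.
From mathcomp Require Import all_boot all_order all_algebra.
Set Implicit Arguments. Unset Strict Implicit. Unset Printing Implicit Defensive.
Import Order.TTheory GRing.Theory Num.Theory.
Local Open Scope ring_scope.

Section TubalDefs.
Variable C : numClosedFieldType.
Variable p : nat.

Definition tube := 'rV[C]_p.

Definition mxH m n (A : 'M[C]_(m, n)) : 'M[C]_(n, m) := (map_mx Num.conj A)^T.

Definition unitary_mx n (W : 'M[C]_n) : Prop :=
  W *m mxH W = 1%:M /\ mxH W *m W = 1%:M.

(* The linear map L : C^p -> C^p is a |-> a *m M (row-vector convention),
   its inverse is b |-> b *m invmx M (M invertible). *)
Definition Lap (M : 'M[C]_p) (a : tube) : tube := a *m M.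
Definition Linv (M : 'M[C]_p) (b : tube) : tube := b *m invmx M.

Definition tsmul (M : 'M[C]_p) (a b : tube) : tube :=
  Linv M (\row_k (Lap M a 0 k * Lap M b 0 k)).

Definition mxe T (d : T) m n (A : 'M[T]_(m, n)) (i j : nat) : T :=
  match (insub i : option 'I_m), (insub j : option 'I_n) with
  | Some i', Some j' => A i' j'
  | _, _ => d
  end.

Definition tmul (M : 'M[C]_p) m n r (A : 'M[tube]_(m, n)) (B : 'M[tube]_(n, r))
  : 'M[tube]_(m, r) :=
  \matrix_(i, k) \sum_j tsmul M (A i j) (B j k).

Definition slice (M : 'M[C]_p) m n (A : 'M[tube]_(m, n)) (k : 'I_p) : 'M[C]_(m, n) :=
  \matrix_(i, j) Lap M (A i j) 0 k.

(* Hermitian transpose: L(A^H)^(k) = (L(A)^(k))^H *)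
Definition tH (M : 'M[C]_p) m n (A : 'M[tube]_(m, n)) : 'M[tube]_(n, m) :=
  \matrix_(i, j) Linv M (map_mx Num.conj (Lap M (A j i))).

(* identity tubal matrix: L(I)^(k) = 1 for every k *)
Definition tI (M : 'M[C]_p) n : 'M[tube]_n :=
  \matrix_(i, j) (if i == j then Linv M (const_mx 1) else 0).

Definition svd_diag m n (S : 'M[C]_(m, n)) : Prop :=
  (forall (i : 'I_m) (j : 'I_n), (i : nat) != j -> S i j = 0) /\
  (forall i : nat, (i < minn m n)%N -> 0 <= mxe 0 S i i) /\
  (forall i i' : nat, (i <= i')%N -> (i' < minn m n)%N -> mxe 0 S i' i' <= mxe 0 S i i).

Definition is_tSVD (M : 'M[C]_p) m n (A : 'M[tube]_(m, n))
  (U : 'M[tube]_m) (Sg : 'M[tube]_(m, n)) (V : 'M[tube]_n) : Prop :=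
  forall k : 'I_p,
    unitary_mx (slice M U k) /\ unitary_mx (slice M V k) /\
    svd_diag (slice M Sg k) /\
    slice M A k = slice M U k *m slice M Sg k *m mxH (slice M V k).

Definition tsnorm (a : tube) : C := sqrtC (\sum_k `|a 0 k| ^+ 2).

Definition trank m n (Sg : 'M[tube]_(m, n)) : nat :=
  \sum_(i < minn m n) nat_of_bool (mxe (0%R : tube) Sg i i != 0%R).

(* sigma_i (0-based index i) *)
Definition tsigma m n (Sg : 'M[tube]_(m, n)) (i : nat) : C := tsnorm (mxe (0%R : tube) Sg i i).

Variable N : nat.

(* Tubal tensors: functions of multi-indices (i_k)_k in nat (0-based);
   a tensor of dims I is determined by its values on i_k < I k. *)
Definition tensor := ('I_N -> nat) -> tube.

Definition tnorm (I : 'I_N -> nat) (A : tensor) : C :=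
  sqrtC (\sum_(x : {dffun forall k : 'I_N, 'I_(I k)})
           \sum_k `|A (fun k => nat_of_ord (x k)) 0 k| ^+ 2).

Definition ucols (I : 'I_N -> nat) (n : 'I_N) : nat := (\prod_(m < N | m != n) I m)%N.
Definition ustride (I : 'I_N -> nat) (n k : 'I_N) : nat :=
  (\prod_(m < N | (m < k)%N && (m != n)) I m)%N.

(* mode-n unfolding (0-based version of j = 1 + sum_{k<>n} (i_k-1) prod_{m<k,m<>n} I_m) *)
Definition unfold (I : 'I_N -> nat) (A : tensor) (n : 'I_N) : 'M[tube]_(I n, ucols I n) :=
  \matrix_(i, j) A (fun k => if k == n then (i : nat) else ((j %/ ustride I n k) %% I k)%N).

Definition tmode (M : 'M[C]_p) (A : tensor) (n : 'I_N) J K (U : 'M[tube]_(J, K)) : tensor :=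
  fun r => \sum_(t < K) tsmul M (A (fun k => if k == n then (t : nat) else r k))
                                 (mxe (0%R : tube) U (r n) t).

Definition tmodes (M : 'M[C]_p) (A : tensor) (a b : 'I_N -> nat)
  (U : forall n : 'I_N, 'M[tube]_(a n, b n)) : tensor :=
  foldl (fun X n => tmode M X n (U n)) A (enum 'I_N).

Definition firstcols m n K (U : 'M[tube]_(m, n)) : 'M[tube]_(m, K) :=
  \matrix_(i, j) mxe (0%R : tube) U i j.

End TubalDefs.

(* Everything reduces to frontal slices of the transformed tensor: as L = cW
   with W unitary, the squared norm of a tubal tensor is |c|^-2 times the sum
   of the squared norms of the slices of L(.), the t-SVD of each unfolding is a
   matrix SVD in each slice, and n-mode products act slice by slice.  In one
   slice, projecting the unfoldings one mode at a time splits the error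
   orthogonally, so the truncation error is at most the sum over n of the
   energy discarded by the rank-I'_n projection onto the leading left singular
   vectors, i.e. the tail of squared singular values.  Conversely, for any
   orthonormal W_n the error dominates the part of the mode-n unfolding outside
   the range of W_n, which by Eckart-Young is at least that same tail; summing
   over the N modes gives the factor sqrt N. *)

From Pilot Require Import Defs.
From HB Require Import structures.
From mathcomp Require Import all_boot all_order all_algebra.
From mathcomp Require Import zify ring.
From Stdlib Require Import FunctionalExtensionality.
Import Order.TTheory GRing.Theory Num.Theory.
Local Open Scope ring_scope.
Set Implicit Arguments. Unset Strict Implicit. Unset Printing Implicit Defensive.

Section Adjoint.
Variable C : numClosedFieldType.

Lemma mxHE m n (A : 'M[C]_(m, n)) i j : mxH A i j = (A j i)^*.
Proof. by rewrite !mxE. Qed.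

Lemma mxHM m n r (A : 'M[C]_(m, n)) (B : 'M[C]_(n, r)) :
  mxH (A *m B) = mxH B *m mxH A.
Proof. by rewrite /Defs.mxH map_mxM trmx_mul. Qed.

Lemma mxHD m n (A B : 'M[C]_(m, n)) : mxH (A + B) = mxH A + mxH B.
Proof. by rewrite /Defs.mxH map_mxD linearD. Qed.

Lemma mxHB m n (A B : 'M[C]_(m, n)) : mxH (A - B) = mxH A - mxH B.
Proof. by rewrite /Defs.mxH map_mxB linearB. Qed.

Lemma mxHZ m n (a : C) (A : 'M[C]_(m, n)) : mxH (a *: A) = a^* *: mxH A.
Proof. by rewrite /Defs.mxH map_mxZ linearZ. Qed.

Lemma mxH1 n : mxH (1%:M : 'M[C]_n) = 1%:M.
Proof. by rewrite /Defs.mxH map_mx1 trmx1. Qed.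

Lemma mxH_pid m n r : mxH (pid_mx r : 'M[C]_(m, n)) = pid_mx r.
Proof. by rewrite /Defs.mxH map_pid_mx tr_pid_mx. Qed.

Lemma mxHK m n (A : 'M[C]_(m, n)) : mxH (mxH A) = A.
Proof. by apply/matrixP=> i j; rewrite !mxHE conjCK. Qed.

Definition frob2 m n (X : 'M[C]_(m, n)) := \sum_i \sum_j `|X i j| ^+ 2.

Lemma frob2_ge0 m n (X : 'M[C]_(m, n)) : 0 <= frob2 X.
Proof. by do 2![apply: sumr_ge0 => ? _]; apply: exprn_ge0. Qed.

Lemma frob2_tr m n (X : 'M[C]_(m, n)) : frob2 X = \tr (X *m mxH X).
Proof.
apply: eq_bigr => i _; rewrite mxE.
by apply: eq_bigr => j _; rewrite mxHE normCK.
Qed.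

Lemma mulmxHH_diag_ge0 m n (Z : 'M[C]_(m, n)) i : 0 <= (mxH Z *m Z) i i.
Proof.
rewrite mxE; apply: sumr_ge0 => j _; rewrite mxHE -normCKC; exact: exprn_ge0.
Qed.

Definition orthoproj n (P : 'M[C]_n) := mxH P = P /\ P *m P = P.

Lemma isometry_orthoproj m r (Y : 'M[C]_(m, r)) :
  mxH Y *m Y = 1%:M -> orthoproj (Y *m mxH Y).
Proof.
move=> YY; split; first by rewrite mxHM mxHK.
by rewrite mulmxA -(mulmxA Y) YY mulmx1.
Qed.

Lemma complproj_isometry m r (Y : 'M[C]_(m, r)) :
  mxH Y *m Y = 1%:M -> (1%:M - Y *m mxH Y) *m Y = 0.
Proof. by move=> YY; rewrite mulmxBl mul1mx -mulmxA YY mulmx1 subrr. Qed.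

Section Projector.
Variables (m : nat) (P : 'M[C]_m).
Hypothesis projP : orthoproj P.

(* The cross terms vanish because (1 - P) P = 0 and the trace is cyclic. *)
Lemma frob2_orthoD n (A B : 'M[C]_(m, n)) :
  frob2 ((1%:M - P) *m A + P *m B) = frob2 ((1%:M - P) *m A) + frob2 (P *m B).
Proof.
case: projP => PH PP.
have PQ0 : P *m (1%:M - P) = 0 by rewrite mulmxBr mulmx1 PP subrr.
have QP0 : (1%:M - P) *m P = 0 by rewrite mulmxBl mul1mx PP subrr.
rewrite !frob2_tr mxHD mulmxDl !mulmxDr !mxtraceD.
rewrite !mxHM PH mxHB mxH1 PH.
have -> : \tr ((1%:M - P) *m A *m (mxH B *m P)) = 0.
  by rewrite mxtrace_mulC mulmxA -(mulmxA _ P) PQ0 mulmx0 mul0mx linear0.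
have -> : \tr (P *m B *m (mxH A *m (1%:M - P))) = 0.
  by rewrite mxtrace_mulC mulmxA -(mulmxA _ (1%:M - P)) QP0 mulmx0 mul0mx linear0.
by rewrite addr0 add0r.
Qed.

Lemma frob2_orthoE n (A : 'M[C]_(m, n)) :
  frob2 A = frob2 ((1%:M - P) *m A) + frob2 (P *m A).
Proof. by rewrite -frob2_orthoD mulmxBl mul1mx subrK. Qed.

Lemma frob2_orthoproj_le n (A : 'M[C]_(m, n)) : frob2 (P *m A) <= frob2 A.
Proof. by rewrite [leRHS](frob2_orthoE A) lerDr frob2_ge0. Qed.

End Projector.
End Adjoint.

Lemma sum_ord_ltn (m r : nat) : (\sum_(i < m) ((i < r)%N : nat))%N = minn r m.
Proof.
elim: m => [|m IH]; first by rewrite big_ord0; lia.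
by rewrite big_ord_recr /= IH; case: ltnP => /=; lia.
Qed.

(* Ky Fan's maximum principle for diagonal weights.  Pivoting at d (r - 1)
   makes every term of the difference nonpositive. *)
Lemma sum_weighted_le_head (R : numDomainType) m (d w : 'I_m -> R) (r : nat) :
  (0 < r <= m)%N -> (forall i j : 'I_m, (i <= j)%N -> d j <= d i) ->
  (forall i, 0 <= w i <= 1) -> \sum_i w i = r%:R ->
  \sum_i w i * d i <= \sum_(i < m | (i < r)%N) d i.
Proof.
move=> /andP[r_gt0 r_le_m] d_noninc w01 sum_w.
have r1_lt_m : (r.-1 < m)%N by lia.
pose c := d (Ordinal r1_lt_m).
have sum_head : \sum_(i < m) ((i < r)%N%:R : R) = r%:R.
  by rewrite -natr_sum sum_ord_ltn (minn_idPl r_le_m).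
rewrite [leRHS]big_mkcond /= -subr_le0 -sumrB.
have -> : \sum_i (w i * d i - (if (i < r)%N then d i else 0))
    = \sum_i (w i - (i < r)%N%:R) * (d i - c) + c * \sum_i (w i - (i < r)%N%:R).
  rewrite mulr_sumr -big_split /=; apply: eq_bigr => i _; case: ifP => _ /=; ring.
rewrite sumrB sum_w sum_head subrr mulr0 addr0.
apply: sumr_le0 => i _; have /andP[w_ge0 w_le1] := w01 i.
case: (ltnP i r) => i_r /=.
  apply: mulr_le0_ge0; first by rewrite subr_le0.
  by rewrite subr_ge0; apply: d_noninc => /=; lia.
apply: mulr_ge0_le0; first by rewrite subr0.
by rewrite subr_le0; apply: d_noninc => /=; lia.
Qed.

Section SVDEnergy.
Variable C : numClosedFieldType.

Definition row_energy m n (S : 'M[C]_(m, n)) (i : 'I_m) := \sum_j `|S i j| ^+ 2.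

Definition rect_diag m n (S : 'M[C]_(m, n)) :=
  forall (i : 'I_m) (j : 'I_n), (i : nat) != j -> S i j = 0.

Lemma row_energy_ge0 m n (S : 'M[C]_(m, n)) i : 0 <= row_energy S i.
Proof. by apply: sumr_ge0 => j _; apply: exprn_ge0. Qed.

Lemma mxtrace_mul_diag m n (G : 'M[C]_m) (S : 'M[C]_(m, n)) : rect_diag S ->
  \tr (G *m (S *m mxH S)) = \sum_i G i i * row_energy S i.
Proof.
move=> S_diag; apply: eq_bigr => i _; rewrite mxE (bigD1 i) //= big1 ?addr0.
  by rewrite mxE; congr (_ * _); apply: eq_bigr => j _; rewrite mxHE normCK.
move=> j j_i; rewrite mxE big1 ?mulr0 // => l _; rewrite mxHE.
have [j_l | j_l] := eqVneq (j : nat) l; last by rewrite (S_diag j l j_l) mul0r.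
by rewrite (S_diag i l) ?conjC0 ?mulr0 // -j_l eq_sym.
Qed.

Section SVD.
Variables (m n : nat) (U : 'M[C]_m) (S : 'M[C]_(m, n)) (V : 'M[C]_n).
Hypotheses (unitU : unitary_mx U) (unitV : unitary_mx V) (diagS : rect_diag S).

Lemma frob2_mul_svd r (Q : 'M[C]_(r, m)) :
  frob2 (Q *m (U *m S *m mxH V)) = \sum_i (mxH U *m mxH Q *m Q *m U) i i * row_energy S i.
Proof.
case: unitV => _ VV; rewrite frob2_tr !mxHM mxHK.
have -> : Q *m (U *m S *m mxH V) *m (V *m (mxH S *m mxH U) *m mxH Q)
   = (Q *m U) *m (S *m mxH S) *m (mxH U *m mxH Q).
  by rewrite !mulmxA -(mulmxA _ (mxH V)) VV mulmx1.
by rewrite mxtrace_mulC -mxtrace_mul_diag // !mulmxA.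
Qed.

Lemma frob2_complproj_svd (P : 'M[C]_m) : orthoproj P ->
  frob2 ((1%:M - P) *m (U *m S *m mxH V)) =
  \sum_i (1 - (mxH U *m P *m U) i i) * row_energy S i.
Proof.
move=> projP; have := frob2_orthoE projP (U *m S *m mxH V).
rewrite -{1}[U *m S *m mxH V]mul1mx => /eqP; rewrite -subr_eq => /eqP <-.
rewrite !frob2_mul_svd mxH1 !mulmx1; case: unitU => _ ->; case: projP => -> PP.
rewrite -(mulmxA _ P P) PP -sumrB; apply: eq_bigr => i _; rewrite mxE eqxx /=; ring.
Qed.

(* Eckart-Young: the diagonal of U^H Y Y^H U gives weights in [0, 1] of total
   mass r, to which Ky Fan's principle applies. *)
Lemma tail_energy_le_frob2_complproj r (Y : 'M[C]_(m, r)) :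
  (forall i j : 'I_m, (i <= j)%N -> row_energy S j <= row_energy S i) ->
  (0 < r <= m)%N -> mxH Y *m Y = 1%:M ->
  \sum_(i < m | (r <= i)%N) row_energy S i <= frob2 ((1%:M - Y *m mxH Y) *m (U *m S *m mxH V)).
Proof.
move=> S_noninc r_bnd YY; have projY := isometry_orthoproj YY.
have [UU1 UU2] := unitU.
rewrite frob2_complproj_svd //.
pose G := mxH U *m (Y *m mxH Y) *m U.
have G_HH : G = mxH (mxH Y *m U) *m (mxH Y *m U) by rewrite /G mxHM mxHK !mulmxA.
have G_compl : 1%:M - G = mxH ((1%:M - Y *m mxH Y) *m U) *m ((1%:M - Y *m mxH Y) *m U).
  case: projY => YH YP.
  have compl_idem : (1%:M - Y *m mxH Y) *m (1%:M - Y *m mxH Y) = 1%:M - Y *m mxH Y.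
    by rewrite mulmxBl mul1mx mulmxBr mulmx1 YP subrr subr0.
  rewrite mxHM mxHB mxH1 YH !mulmxA -(mulmxA (mxH U)) compl_idem.
  by rewrite mulmxBr mulmx1 mulmxBl UU2.
have G01 : forall i, 0 <= G i i <= 1.
  move=> i; rewrite G_HH mulmxHH_diag_ge0 -subr_ge0 -G_HH.
  by have := mulmxHH_diag_ge0 ((1%:M - Y *m mxH Y) *m U) i; rewrite -G_compl !mxE eqxx.
have trG : \sum_i G i i = r%:R.
  rewrite G_HH; change (\tr (mxH (mxH Y *m U) *m (mxH Y *m U)) = r%:R).
  by rewrite mxtrace_mulC mxHM mxHK mulmxA -(mulmxA _ U) UU1 mulmx1 YY mxtrace1.
have KF := sum_weighted_le_head r_bnd S_noninc G01 trG.
have split_e : \sum_i row_energy S i =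
    \sum_(i < m | (i < r)%N) row_energy S i + \sum_(i < m | (r <= i)%N) row_energy S i.
  by rewrite (bigID (fun i : 'I_m => (i < r)%N)); congr (_ + _); apply: eq_bigl => i; rewrite -leqNgt.
have -> : \sum_i (1 - G i i) * row_energy S i =
    \sum_i row_energy S i - \sum_i G i i * row_energy S i.
  by rewrite -sumrB; apply: eq_bigr => i _; rewrite mulrBl mul1r.
by rewrite split_e addrAC addrC lerDl subr_ge0.
Qed.

Lemma frob2_complproj_svd_head r : (r <= m)%N ->
  frob2 ((1%:M - (U *m pid_mx r) *m mxH (U *m (pid_mx r : 'M_(m, r)))) *m (U *m S *m mxH V)) =
  \sum_(i < m | (r <= i)%N) row_energy S i.
Proof.
move=> r_le_m; have [UU1 UU2] := unitU.
have Upid_isometry : mxH (U *m pid_mx r) *m (U *m (pid_mx r : 'M_(m, r))) = 1%:M.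
  by rewrite mxHM mxH_pid mulmxA -(mulmxA _ (mxH U)) UU2 mulmx1 pid_mx_id // pid_mx_1.
rewrite frob2_complproj_svd; last exact: isometry_orthoproj.
rewrite mxHM mxH_pid !mulmxA UU2 mul1mx -mulmxA UU2 mulmx1 pid_mx_id // [RHS]big_mkcond /=.
apply: eq_bigr => i _; rewrite mxE eqxx /= ltnNge.
by case: leqP => _; rewrite ?subr0 ?mul1r ?subrr ?mul0r.
Qed.

End SVD.
End SVDEnergy.

Lemma modn_mul_split j a b : (j %% (a * b) = j %/ b %% a * b + j %% b)%N.
Proof.
rewrite modn_divl -[in RHS](modn_dvdm j (dvdn_mull a (dvdnn b))).
exact: divn_eq.
Qed.

Section Unfolding.
Variables (N : nat) (I : 'I_N -> nat) (n : 'I_N).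

Definition partial_stride (K : nat) := (\prod_(m < N | (m < K)%N && (m != n)) I m)%N.

(* The column index of the mode-n unfolding is a mixed-radix numeral whose
   digits are the remaining tensor indices. *)
Lemma modn_partial_stride K j : (K <= N)%N ->
  (j %% partial_stride K =
   \sum_(k < N | (k < K)%N && (k != n)) (j %/ ustride I n k %% I k) * ustride I n k)%N.
Proof.
elim: K => [|K IH] K_le_N; first by rewrite /partial_stride !big_pred0 ?modn1.
pose kK : 'I_N := Ordinal K_le_N.
have [kK_n | kK_n] := eqVneq kK n.
  have same_range (m : 'I_N) : ((m < K.+1)%N && (m != n)) = ((m < K)%N && (m != n)).
    rewrite ltnS leq_eqVlt; have [m_K | //] := eqVneq (m : nat) K.
    by rewrite -kK_n (_ : m = kK) ?eqxx ?andbF //; apply: val_inj.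
  by rewrite /partial_stride !(eq_bigl _ _ same_range) -IH // ltnW.
have range_D1 (m : 'I_N) : ((m < K.+1)%N && (m != n) && (m != kK)) = ((m < K)%N && (m != n)).
  rewrite ltnS leq_eqVlt; have [m_K | m_K] := eqVneq (m : nat) K.
    by rewrite (_ : m = kK) ?eqxx ?andbF ?ltnn //; apply: val_inj.
  by rewrite (_ : m != kK) ?andbT //; apply: contra_neq m_K => ->.
have kK_in : (kK < K.+1)%N && (kK != n) by rewrite /= ltnS leqnn kK_n.
rewrite /partial_stride (bigD1 kK kK_in) (eq_bigl _ _ range_D1) /=.
rewrite (bigD1 kK kK_in) (eq_bigl _ _ range_D1) /=.
by rewrite -/(partial_stride K) modn_mul_split IH 1?ltnW // addnC.
Qed.

Lemma unfold_digits j : (j < ucols I n)%N ->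
  j = (\sum_(k < N | k != n) (j %/ ustride I n k %% I k) * ustride I n k)%N.
Proof.
move=> j_lt; have full : partial_stride N = ucols I n.
  by apply: eq_bigl => m; rewrite ltn_ord.
rewrite -{1}(modn_small j_lt) -full modn_partial_stride //.
by apply: eq_bigl => m; rewrite ltn_ord.
Qed.

Definition unfold_index (i j : nat) : 'I_N -> nat :=
  fun k => if k == n then i else (j %/ ustride I n k %% I k)%N.

Hypothesis I_gt0 : forall k, (0 < I k)%N.

Lemma unfold_index_lt (i : 'I_(I n)) j k : (unfold_index i j k < I k)%N.
Proof. by rewrite /unfold_index; case: eqP => [-> | _]; rewrite ?ltn_pmod. Qed.

Definition box := {dffun forall k : 'I_N, 'I_(I k)}.

Definition unfold_box (ij : 'I_(I n) * 'I_(ucols I n)) : box :=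
  [ffun k => Ordinal (unfold_index_lt ij.1 ij.2 k)].

Lemma unfold_boxE ij : (fun k => nat_of_ord (unfold_box ij k)) = unfold_index ij.1 ij.2.
Proof. by apply: functional_extensionality => k; rewrite ffunE. Qed.

Lemma unfold_box_inj : injective unfold_box.
Proof.
move=> [i j] [i' j'] /(congr1 (fun x : box => fun k => nat_of_ord (x k))).
rewrite !unfold_boxE /= => same_index.
have ii' : (i : nat) = i'.
  by have := congr1 (fun f => f n) same_index; rewrite /unfold_index eqxx.
have jj' : (j : nat) = j'.
  rewrite (unfold_digits (ltn_ord j)) (unfold_digits (ltn_ord j')).
  apply: eq_bigr => k k_n; have := congr1 (fun f => f k) same_index.
  by rewrite /unfold_index (negbTE k_n) => ->.
by congr pair; apply: val_inj.
Qed.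

Lemma card_box : #|box| = (I n * ucols I n)%N.
Proof.
rewrite card_dep_ffun foldrE big_map enumT (bigD1 n) //= card_ord.
by congr (_ * _)%N; apply: eq_bigr => k _; rewrite card_ord.
Qed.

Lemma unfold_box_bij : bijective unfold_box.
Proof.
apply: inj_card_bij; first exact: unfold_box_inj.
by rewrite card_box card_prod !card_ord.
Qed.

End Unfolding.

Section MatrixEntry.
Variables (T : Type) (d : T) (m n : nat) (A : 'M[T]_(m, n)).

Lemma mxeE (i : 'I_m) (j : 'I_n) : mxe d A i j = A i j.
Proof. by rewrite /mxe !valK. Qed.

Lemma mxe_outl (i j : nat) : (m <= i)%N -> mxe d A i j = d.
Proof. by move=> m_le_i; rewrite /mxe insubN // -leqNgt. Qed.

Lemma mxe_outr (i j : nat) : (n <= j)%N -> mxe d A i j = d.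
Proof. by move=> n_le_j; rewrite /mxe; case: insubP => // *; rewrite insubN // -leqNgt. Qed.

Lemma mxe_diag_out (i : nat) : (minn m n <= i)%N -> mxe d A i i = d.
Proof. by case: (leqP m i) => [/mxe_outl | ] // m_gt_i ?; rewrite mxe_outr //; lia. Qed.

End MatrixEntry.

Section ScalarTensor.
Variables (C : numClosedFieldType) (N : nat).
Local Notation stensor := (('I_N -> nat) -> C).

Definition sfrob2 (I : 'I_N -> nat) (a : stensor) : C :=
  \sum_(x : box I) `|a (fun k => nat_of_ord (x k))| ^+ 2.

Definition sunfold (I : 'I_N -> nat) (a : stensor) (n : 'I_N) : 'M[C]_(I n, ucols I n) :=
  \matrix_(i, j) a (unfold_index I n i j).

Lemma sfrob2_ge0 I (a : stensor) : 0 <= sfrob2 I a.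
Proof. by apply: sumr_ge0 => x _; apply: exprn_ge0. Qed.

Lemma sfrob2_unfold I (a : stensor) n : (forall k, (0 < I k)%N) ->
  sfrob2 I a = frob2 (sunfold I a n).
Proof.
move=> I_gt0; rewrite /sfrob2 (reindex _ (onW_bij _ (unfold_box_bij n I_gt0))).
by rewrite /frob2 pair_big; apply: eq_bigr => -[i j] _; rewrite unfold_boxE mxE.
Qed.

Lemma sunfoldB I (a b : stensor) n :
  sunfold I (fun r => a r - b r) n = sunfold I a n - sunfold I b n.
Proof. by apply/matrixP => i j; rewrite !mxE. Qed.

Definition set_index (r : 'I_N -> nat) (n : 'I_N) (t : nat) : 'I_N -> nat :=
  fun k => if k == n then t else r k.

Lemma set_index_id r n t u : set_index (set_index r n t) n u = set_index r n u.
Proof. by apply: functional_extensionality => k; rewrite /set_index; case: eqP. Qed.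

Lemma set_indexC r m n t u :
  m != n -> set_index (set_index r n t) m u = set_index (set_index r m u) n t.
Proof.
move=> m_n; apply: functional_extensionality => k; rewrite /set_index.
by have [-> | //] := eqVneq k m; rewrite (negbTE m_n).
Qed.

Definition smode (a : stensor) (n : 'I_N) J K (Q : 'M[C]_(J, K)) : stensor :=
  fun r => \sum_(t < K) a (set_index r n t) * mxe 0 Q (r n) t.

Lemma sunfold_smode I (a : stensor) n (Q : 'M[C]_(I n)) :
  sunfold I (smode a n Q) n = Q *m sunfold I a n.
Proof.
apply/matrixP => i j; rewrite !mxE; apply: eq_bigr => t _.
rewrite !mxE mulrC /unfold_index eqxx mxeE; congr (_ * _); congr a.
by apply: functional_extensionality => k; rewrite /set_index; case: eqP.
Qed.

Lemma smodeC (a : stensor) m n J K J' K' (Q : 'M[C]_(J, K)) (R : 'M[C]_(J', K')) :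
  m != n -> smode (smode a m Q) n R = smode (smode a n R) m Q.
Proof.
move=> m_n; apply: functional_extensionality => r; rewrite /smode.
under eq_bigr do rewrite mulr_suml.
rewrite exchange_big /=; apply: eq_bigr => u _; rewrite mulr_suml.
apply: eq_bigr => t _; rewrite set_indexC //.
have -> : set_index r n t m = r m by rewrite /set_index (negbTE m_n).
have -> : set_index r m u n = r n by rewrite /set_index eq_sym (negbTE m_n).
by rewrite mulrAC.
Qed.

Lemma smode_mul (a : stensor) n J K J' (Q : 'M[C]_(J, K)) (R : 'M[C]_(J', J)) :
  smode (smode a n Q) n R = smode a n (R *m Q).
Proof.
apply: functional_extensionality => r; rewrite /smode.
under eq_bigr do rewrite mulr_suml.
rewrite exchange_big /=; apply: eq_bigr => u _.
have [r_lt | r_ge] := ltnP (r n) J'; last first.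
  by rewrite (mxe_outl 0 (R *m Q)) // mulr0 big1 // => t _; rewrite (mxe_outl 0 R) // mulr0.
rewrite (mxeE 0 (R *m Q) (Ordinal r_lt)) mxE mulr_sumr; apply: eq_bigr => t _.
rewrite set_index_id {2}/set_index eqxx !mxeE (mxeE 0 R (Ordinal r_lt)).
by rewrite [R _ _ * _]mulrC mulrA.
Qed.

Lemma smode0 (a : stensor) n J K : smode a n (0 : 'M[C]_(J, K)) = fun _ => 0.
Proof.
apply: functional_extensionality => r; rewrite /smode big1 // => t _.
have [r_lt | r_ge] := ltnP (r n) J; last by rewrite mxe_outl // mulr0.
by rewrite (mxeE 0 _ (Ordinal r_lt)) mxE mulr0.
Qed.

End ScalarTensor.

Section FoldCommute.
Variables (N : nat) (T : Type).
Local Notation foldm G := (foldl (fun b n => G n b)).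

Lemma foldl_commute (F G : 'I_N -> T -> T) x l b : x \notin l ->
  (forall m, m \in l -> forall b, F x (G m b) = G m (F x b)) ->
  F x (foldm G b l) = foldm G (F x b) l.
Proof.
elim: l b => [|y l IH] b //=; rewrite in_cons negb_or => /andP[x_y x_l] FG.
by rewrite IH ?FG ?mem_head // => m m_l; apply: FG; rewrite in_cons m_l orbT.
Qed.

Lemma foldl_fuse (F G H : 'I_N -> T -> T) l a : uniq l ->
  (forall m n, m != n -> forall b, F m (G n b) = G n (F m b)) ->
  (forall n b, F n (G n b) = H n b) ->
  foldm F (foldm G a l) l = foldm H a l.
Proof.
elim: l a => [|x l IH] a //= /andP[x_l uniq_l] FG FGH.
rewrite foldl_commute // ?FGH ?IH // => m m_l b.
by apply: FG; apply: contraNneq x_l => ->.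
Qed.

Lemma foldl_exists_last (G : 'I_N -> T -> T) l a x : uniq l -> x \in l ->
  (forall m, m != x -> forall b, G x (G m b) = G m (G x b)) ->
  exists b, foldm G a l = G x b.
Proof.
elim: l a => [|y l IH] a //= /andP[y_l uniq_l]; rewrite in_cons => x_in GG.
have [x_y | x_y] := eqVneq x y; last by apply: IH; rewrite (negbTE x_y) in x_in.
subst y; exists (foldm G a l); apply: esym; apply: foldl_commute => // m m_l b.
by apply: GG; apply: contraNneq y_l => <-.
Qed.

End FoldCommute.

Section Slices.
Variables (C : numClosedFieldType) (p : nat) (M : 'M[C]_p).
Hypothesis unitM : M \in unitmx.
Local Notation tube := (tube C p).

Lemma Lap_Linv b : Lap M (Linv M b) = b.
Proof. by rewrite /Lap /Linv mulmxKV. Qed.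

Lemma Lap0 : Lap M 0 = 0.
Proof. by rewrite /Lap mul0mx. Qed.

Lemma Lap_eq0 (b : tube) : Lap M b = 0 -> b = 0.
Proof. by move=> Lb0; rewrite -(mulmxK unitM b) -/(Lap M b) Lb0 mul0mx. Qed.

Lemma Lap_sum (T : Type) (s : seq T) (f : T -> tube) k :
  Lap M (\sum_(t <- s) f t) 0 k = \sum_(t <- s) Lap M (f t) 0 k.
Proof. by rewrite /Lap mulmx_suml summxE. Qed.

Lemma LapB a b k : Lap M (a - b) 0 k = Lap M a 0 k - Lap M b 0 k.
Proof. by rewrite /Lap mulmxBl !mxE. Qed.

Lemma Lap_tsmul a b k : Lap M (tsmul M a b) 0 k = Lap M a 0 k * Lap M b 0 k.
Proof. by rewrite /tsmul Lap_Linv mxE. Qed.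

Lemma sliceE m n (U : 'M[tube]_(m, n)) k i j : slice M U k i j = Lap M (U i j) 0 k.
Proof. exact: mxE. Qed.

Lemma Lap_mxe J K (U : 'M[tube]_(J, K)) (i t : nat) k :
  Lap M (mxe 0 U i t) 0 k = mxe 0 (slice M U k) i t.
Proof.
have [i_lt | i_ge] := ltnP i J; last by rewrite !mxe_outl // Lap0 mxE.
have [t_lt | t_ge] := ltnP t K; last by rewrite !mxe_outr // Lap0 mxE.
rewrite (mxeE _ U (Ordinal i_lt) (Ordinal t_lt)).
by rewrite [RHS](mxeE 0 _ (Ordinal i_lt) (Ordinal t_lt)) sliceE.
Qed.

Lemma slice_tH m n (U : 'M[tube]_(m, n)) k : slice M (tH M U) k = mxH (slice M U k).
Proof. by apply/matrixP => i j; rewrite sliceE [tH M U i j]mxE Lap_Linv mxE mxHE sliceE. Qed.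

Lemma slice_tmul m n r (A : 'M[tube]_(m, n)) (B : 'M[tube]_(n, r)) k :
  slice M (tmul M A B) k = slice M A k *m slice M B k.
Proof.
apply/matrixP => i j; rewrite sliceE [tmul M A B i j]mxE Lap_sum [RHS]mxE.
by apply: eq_bigr => t _; rewrite Lap_tsmul !sliceE.
Qed.

Lemma slice_tI n k : slice M (tI M n) k = 1%:M.
Proof.
by apply/matrixP => i j; rewrite sliceE [tI M n i j]mxE [RHS]mxE; case: eqP => _; rewrite ?Lap_Linv ?Lap0 mxE.
Qed.

Lemma slice_firstcols m K (U : 'M[tube]_m) k : (K <= m)%N ->
  slice M (firstcols K U) k = slice M U k *m pid_mx K.
Proof.
move=> K_le_m; apply/matrixP => i j; rewrite sliceE [firstcols K U i j]mxE Lap_mxe [RHS]mxE.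
have j_lt : (j < m)%N by apply: leq_trans (ltn_ord j) K_le_m.
rewrite (mxeE _ _ i (Ordinal j_lt)) (bigD1 (Ordinal j_lt)) //= big1 ?addr0.
  by rewrite [pid_mx K _ _]mxE /= eqxx ltn_ord mulr1.
move=> t; rewrite -val_eqE /= => /negbTE t_j.
by rewrite [pid_mx K _ _]mxE t_j mulr0.
Qed.

Variable N : nat.

Definition tslice (X : tensor C p N) (k : 'I_p) : ('I_N -> nat) -> C :=
  fun r => Lap M (X r) 0 k.

Lemma tsliceB (X Y : tensor C p N) k :
  tslice (fun x => X x - Y x) k = (fun r => tslice X k r - tslice Y k r).
Proof. by apply: functional_extensionality => r; rewrite /tslice LapB. Qed.

Lemma tslice_unfold I (A : tensor C p N) n k :
  slice M (unfold I A n) k = sunfold I (tslice A k) n.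
Proof. by apply/matrixP => i j; rewrite sliceE [unfold I A n i j]mxE [RHS]mxE. Qed.

Lemma tslice_tmode X n J K (U : 'M[tube]_(J, K)) k :
  tslice (tmode M X n U) k = smode (tslice X k) n (slice M U k).
Proof.
apply: functional_extensionality => r; rewrite /tslice /tmode Lap_sum.
by apply: eq_bigr => t _; rewrite Lap_tsmul Lap_mxe.
Qed.

Lemma tslice_tmodes (a b : 'I_N -> nat) (U : forall n : 'I_N, 'M[tube]_(a n, b n)) X k :
  tslice (tmodes M X U) k =
  foldl (fun v n => smode v n (slice M (U n) k)) (tslice X k) (enum 'I_N).
Proof. by rewrite /tmodes; elim: (enum 'I_N) X => [|x l IH] X //=; rewrite IH tslice_tmode. Qed.

End Slices.

Section ScaledUnitary.
Variables (C : numClosedFieldType) (p : nat) (c : C) (W : 'M[C]_p).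
Hypotheses (c_neq0 : c != 0) (unitW : unitary_mx W).
Local Notation M := (c *: W).

Lemma unitmx_scaled_unitary : M \in unitmx.
Proof.
rewrite unitmxZ ?unitfE //; case: unitW => WW _.
by case: (mulmx1_unit WW).
Qed.

Lemma Lap_energy (b : tube C p) :
  \sum_k `|Lap M b 0 k| ^+ 2 = `|c| ^+ 2 * \sum_k `|b 0 k| ^+ 2.
Proof.
have row_energy_mul (v : 'rV[C]_p) : \sum_k `|v 0 k| ^+ 2 = (v *m mxH v) 0 0.
  by rewrite mxE; apply: eq_bigr => k _; rewrite mxHE normCK.
rewrite !row_energy_mul /Lap -scalemxAr mxHZ -scalemxAl -scalemxAr scalerA.
rewrite mxHM mulmxA -(mulmxA b W); case: unitW => -> _.
by rewrite mulmx1 [LHS]mxE normCK.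
Qed.

Lemma energy_Lap (b : tube C p) :
  \sum_k `|b 0 k| ^+ 2 = (`|c| ^+ 2)^-1 * \sum_k `|Lap M b 0 k| ^+ 2.
Proof. by rewrite Lap_energy mulKf // expf_neq0 // normr_eq0. Qed.

Lemma tnorm_slices N I (X : tensor C p N) :
  tnorm I X = sqrtC ((`|c| ^+ 2)^-1 * \sum_k sfrob2 I (tslice M X k)).
Proof.
rewrite /tnorm /sfrob2 [X in _ * X]exchange_big mulr_sumr /=.
by congr sqrtC; apply: eq_bigr => x _; rewrite energy_Lap mulr_sumr.
Qed.

Lemma tsigma_sqr m n (Sg : 'M[tube C p]_(m, n)) i :
  tsigma Sg i ^+ 2 = (`|c| ^+ 2)^-1 * \sum_k `|mxe 0 (slice M Sg k) i i| ^+ 2.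
Proof.
rewrite /tsigma /tsnorm sqrtCK energy_Lap; congr (_ * _).
by apply: eq_bigr => k _; rewrite Lap_mxe.
Qed.

End ScaledUnitary.

Section SVDDiagonal.
Variable C : numClosedFieldType.

Lemma svd_diag_rect m n (S : 'M[C]_(m, n)) : svd_diag S -> rect_diag S.
Proof. by case. Qed.

Lemma row_energy_mxe m n (S : 'M[C]_(m, n)) i :
  rect_diag S -> row_energy S i = `|mxe 0 S i i| ^+ 2.
Proof.
move=> S_diag; rewrite /row_energy; have [i_lt | i_ge] := ltnP i n.
  rewrite (bigD1 (Ordinal i_lt)) //= big1 ?addr0; first by rewrite (mxeE 0 S i (Ordinal i_lt)).
  move=> j j_i; rewrite S_diag ?normr0 ?expr0n //.
  by apply: contra j_i => /eqP i_j; apply/eqP/val_inj.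
rewrite mxe_outr // normr0 expr0n big1 // => j _.
by rewrite S_diag ?normr0 ?expr0n // neq_ltn (leq_trans (ltn_ord j) i_ge) orbT.
Qed.

Lemma svd_diag_row_energy_noninc m n (S : 'M[C]_(m, n)) : svd_diag S ->
  forall i j : 'I_m, (i <= j)%N -> row_energy S j <= row_energy S i.
Proof.
move=> S_svd i j i_le_j; have S_diag := svd_diag_rect S_svd.
rewrite !row_energy_mxe //; have [j_lt | j_ge] := ltnP j (minn m n); last first.
  by rewrite mxe_diag_out // normr0 expr0n exprn_ge0.
case: S_svd => _ [S_ge0 S_noninc].
have Sj_ge0 := S_ge0 _ j_lt; have Si_ge0 := S_ge0 _ (leq_ltn_trans i_le_j j_lt).
by rewrite !ger0_norm // lerXn2r // ?nnegrE // S_noninc.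
Qed.

End SVDDiagonal.

Lemma trank_le (C : numClosedFieldType) p m n (Sg : 'M[tube C p]_(m, n)) :
  (trank Sg <= minn m n)%N.
Proof.
rewrite /trank -[X in (_ <= X)%N]card_ord -sum1_card.
by apply: leq_sum => i _; exact: leq_b1.
Qed.

Section TRank.
Variables (C : numClosedFieldType) (p : nat) (M : 'M[C]_p).
Hypothesis unitM : M \in unitmx.
Variables (m n : nat) (Sg : 'M[tube C p]_(m, n)).
Hypothesis Sg_svd : forall k, svd_diag (slice M Sg k).

(* Every frontal slice of Sigma has a nonincreasing nonnegative diagonal, so
   the nonzero diagonal tubes of Sigma form a prefix. *)
Lemma svd_diag_tube_prefix i j : (j <= i)%N ->
  mxe 0 Sg i i != 0 -> mxe 0 Sg j j != 0.
Proof.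
move=> j_le_i Sii_neq0.
have i_lt : (i < minn m n)%N.
  by rewrite ltnNge; apply: contra Sii_neq0 => ?; rewrite mxe_diag_out.
have [k Sk_neq0] : exists k, Lap M (mxe 0 Sg i i) 0 k != 0.
  apply/existsP; apply: contraR Sii_neq0; rewrite negb_exists => /forallP Sk0.
  apply/eqP; apply: (Lap_eq0 unitM); apply/rowP => k.
  by have := Sk0 k; rewrite negbK [(0 : 'rV[C]_p) 0 k]mxE => /eqP.
apply: contraNneq Sk_neq0 => Sjj0; rewrite Lap_mxe.
have [_ [S_ge0 S_noninc]] := Sg_svd k.
have := S_noninc _ _ j_le_i i_lt.
rewrite -[mxe 0 (slice M Sg k) j j]Lap_mxe Sjj0 Lap0 mxE => Sii_le0.
by rewrite eq_le Sii_le0 S_ge0.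
Qed.

Lemma mxe_trank_out i : (trank Sg <= i)%N -> mxe 0 Sg i i = 0.
Proof.
move=> trank_le_i; apply/eqP; apply: contraTT trank_le_i => Sii_neq0.
have i_lt : (i < minn m n)%N.
  by rewrite ltnNge; apply: contra Sii_neq0 => ?; rewrite mxe_diag_out.
rewrite -ltnNge /trank.
apply: (@leq_trans (\sum_(j < minn m n) ((j < i.+1)%N : nat))); first by rewrite sum_ord_ltn; lia.
apply: leq_sum => j _; case: ltnP => //= j_le_i.
by rewrite (svd_diag_tube_prefix (j := j) j_le_i Sii_neq0).
Qed.

End TRank.

Lemma sum_ord_geq_trunc (V : nmodType) m r R (e : nat -> V) :
  (R <= m)%N -> (forall i, (R <= i)%N -> e i = 0) ->
  \sum_(i < m | (r <= i)%N) e i = \sum_(r <= i < R) e i.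
Proof.
move=> R_le_m e0; rewrite big_geq_mkord (big_ord_widen_cond _ _ _ R_le_m).
rewrite [LHS]big_mkcond [RHS]big_mkcond; apply: eq_bigr => i _ /=.
by case: (r <= i)%N => //; case: ltnP => // /e0 ->.
Qed.

Section ModeProjection.
Variables (C : numClosedFieldType) (N : nat) (I : 'I_N -> nat).
Hypothesis I_gt0 : forall k, (0 < I k)%N.
Local Notation stensor := (('I_N -> nat) -> C).

(* Projecting along one more mode n, the new error splits orthogonally into
   the mode-n complement of [a] and a projection of the previous error. *)
Lemma sfrob2_sub_smodes_le (a : stensor) (P : forall n : 'I_N, 'M[C]_(I n)) l :
  (forall n, orthoproj (P n)) ->
  sfrob2 I (fun r => a r - foldl (fun v n => smode v n (P n)) a l r) <=
  \sum_(n <- l) frob2 ((1%:M - P n) *m sunfold I a n).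
Proof.
move=> projP; elim/last_ind: l => [|l x IH].
  by rewrite big_nil /sfrob2 big1 // => y _; rewrite subrr normr0 expr0n.
rewrite foldl_rcons -cats1 big_cat big_seq1 /=.
set b := foldl _ a l.
rewrite (sfrob2_unfold _ x I_gt0) sunfoldB sunfold_smode.
have -> : sunfold I a x - P x *m sunfold I b x =
    (1%:M - P x) *m sunfold I a x + P x *m (sunfold I a x - sunfold I b x).
  by rewrite mulmxBr mulmxBl mul1mx addrA subrK.
rewrite frob2_orthoD // addrC lerD //.
apply: le_trans (frob2_orthoproj_le (projP x) _) _.
by rewrite -sunfoldB -sfrob2_unfold.
Qed.

Lemma frob2_complproj_le_sfrob2 (a b : stensor) n r (Y : 'M[C]_(I n, r)) :
  mxH Y *m Y = 1%:M ->
  frob2 ((1%:M - Y *m mxH Y) *m sunfold I a n) <= sfrob2 I (fun x => a x - smode b n Y x).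
Proof.
move=> YY; have projY := isometry_orthoproj YY.
rewrite (sfrob2_unfold _ n I_gt0) sunfoldB [leRHS](frob2_orthoE projY) mulmxBr.
rewrite -[(1%:M - _) *m sunfold I (smode b n Y) n]sunfold_smode smode_mul complproj_isometry // smode0.
have -> : sunfold I (fun _ => 0) n = 0 :> 'M[C]_(I n, ucols I n) by apply/matrixP => i j; rewrite !mxE.
by rewrite subr0 lerDl frob2_ge0.
Qed.

End ModeProjection.

Section TruncatedHOSVD.
Variables (C : numClosedFieldType) (p N : nat) (c : C) (W : 'M[C]_p).
Hypotheses (c_neq0 : c != 0) (unitW : unitary_mx W).
Variables (I I' : 'I_N -> nat).
Hypothesis I'_bnd : forall n, (1 <= I' n <= I n)%N.
Variables (A : tensor C p N) (U : forall n : 'I_N, 'M[tube C p]_(I n)).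
Variables (Sg : forall n : 'I_N, 'M[tube C p]_(I n, ucols I n)).
Variables (V : forall n : 'I_N, 'M[tube C p]_(ucols I n)).
Hypothesis A_svd : forall n : 'I_N, is_tSVD (c *: W) (unfold I A n) (U n) (Sg n) (V n).
Local Notation M := (c *: W).

Let unitM := unitmx_scaled_unitary c_neq0 unitW.

Let I_gt0 k : (0 < I k)%N. Proof. by have := I'_bnd k; lia. Qed.

Let I'_le n : (I' n <= I n)%N. Proof. by have := I'_bnd n; lia. Qed.

Definition mode_tail n k := \sum_(i < I n | (I' n <= i)%N) row_energy (slice M (Sg n) k) i.

Lemma mode_tail_ge0 n k : 0 <= mode_tail n k.
Proof. by apply: sumr_ge0 => i _; apply: row_energy_ge0. Qed.

Lemma sunfold_slice_svd n k : sunfold I (tslice M A k) n =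
  slice M (U n) k *m slice M (Sg n) k *m mxH (slice M (V n) k).
Proof. by have [_ [_ [_ <-]]] := A_svd n k; rewrite tslice_unfold. Qed.

Lemma tsigma_tail_sum : \sum_(n < N) \sum_(I' n <= i < trank (Sg n)) tsigma (Sg n) i ^+ 2 =
  (`|c| ^+ 2)^-1 * \sum_k \sum_(n < N) mode_tail n k.
Proof.
rewrite exchange_big mulr_sumr; apply: eq_bigr => n _.
have Sg_svd k : svd_diag (slice M (Sg n) k) by have [_ [_ []]] := A_svd n k.
pose e k i := `|mxe 0 (slice M (Sg n) k) i i| ^+ 2.
have mode_tailE k : mode_tail n k = \sum_(I' n <= i < trank (Sg n)) e k i.
  rewrite /mode_tail; under eq_bigr do rewrite (row_energy_mxe _ (svd_diag_rect (Sg_svd k))).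
  apply: (@sum_ord_geq_trunc _ _ _ _ (e k)) => [|i /(mxe_trank_out unitM Sg_svd) Sii0].
    by have := trank_le (Sg n); lia.
  by rewrite /e -Lap_mxe Sii0 Lap0 mxE normr0 expr0n.
rewrite (eq_bigr _ (fun k _ => mode_tailE k)) exchange_big mulr_sumr; apply: eq_bigr => i _.
by rewrite (tsigma_sqr c_neq0 unitW).
Qed.

Local Notation Ubar := (fun n : 'I_N => firstcols (I' n) (U n)).

Lemma hosvd_slice_error_le k :
  sfrob2 I (tslice M (fun x => A x - tmodes M (tmodes M A (fun n => tH M (Ubar n))) Ubar x) k)
  <= \sum_n mode_tail n k.
Proof.
rewrite tsliceB !tslice_tmodes //.
pose Y n : 'M[C]_(I n, I' n) := slice M (U n) k *m pid_mx (I' n).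
have Y_iso n : mxH (Y n) *m Y n = 1%:M.
  have [[_ UU] _] := A_svd n k.
  by rewrite mxHM mxH_pid mulmxA -(mulmxA _ (mxH _)) UU mulmx1 pid_mx_id // pid_mx_1.
have sliceUbar n : slice M (Ubar n) k = Y n by rewrite slice_firstcols.
rewrite (_ : (fun v n => smode v n (slice M (Ubar n) k)) = (fun v n => smode v n (Y n))); last first.
  by do 2!apply: functional_extensionality => ?; rewrite sliceUbar.
rewrite (_ : (fun v n => smode v n (slice M (tH M (Ubar n)) k)) =
             (fun v n => smode v n (mxH (Y n)))); last first.
  by do 2!apply: functional_extensionality => ?; rewrite slice_tH // sliceUbar.
rewrite (foldl_fuse (F := fun n v => smode v n (Y n)) (G := fun n v => smode v n (mxH (Y n)))
           (H := fun n v => smode v n (Y n *m mxH (Y n)))); first last.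
- by move=> n v; rewrite smode_mul.
- by move=> m n m_n v; rewrite smodeC // eq_sym.
- exact: enum_uniq.
apply: le_trans (sfrob2_sub_smodes_le I_gt0 _ _ (fun n => isometry_orthoproj (Y_iso n))) _.
rewrite enumT; apply: ler_sum => n _; have [unitU [unitV [Sg_svd _]]] := A_svd n k.
by rewrite sunfold_slice_svd /Y (frob2_complproj_svd_head unitU unitV (svd_diag_rect Sg_svd)).
Qed.

Lemma mode_tail_le_slice_error (S : tensor C p N)
    (Wn : forall n : 'I_N, 'M[tube C p]_(I n, I' n)) n k :
  (forall n, tmul M (tH M (Wn n)) (Wn n) = tI M (I' n)) ->
  mode_tail n k <= sfrob2 I (tslice M (fun x => A x - tmodes M S Wn x) k).
Proof.
move=> Wn_iso; rewrite tsliceB tslice_tmodes //.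
have Y_iso : mxH (slice M (Wn n) k) *m slice M (Wn n) k = 1%:M.
  by rewrite -slice_tH // -slice_tmul // Wn_iso slice_tI.
have [b ->] := foldl_exists_last (G := fun m v => smode v m (slice M (Wn m) k))
  (tslice M S k) (enum_uniq _) (mem_enum _ n) (fun m m_n v => smodeC _ _ _ m_n).
have [unitU [unitV [Sg_svd _]]] := A_svd n k.
apply: le_trans (tail_energy_le_frob2_complproj unitU unitV (svd_diag_rect Sg_svd)
  (svd_diag_row_energy_noninc Sg_svd) (I'_bnd n) Y_iso) _.
by rewrite -sunfold_slice_svd frob2_complproj_le_sfrob2.
Qed.

End TruncatedHOSVD.

Unset Implicit Arguments.

Theorem theorem5p4 (C : numClosedFieldType) (p N : nat) (hp : (0 < p)%N)
  (c : C) (W : 'M[C]_p) (hc : c != 0) (hW : unitary_mx W)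
  (I I' : 'I_N -> nat) (hI' : forall n, (1 <= I' n <= I n)%N)
  (A : tensor C p N)
  (U : forall n : 'I_N, 'M[tube C p]_(I n))
  (Sg : forall n : 'I_N, 'M[tube C p]_(I n, ucols I n))
  (V : forall n : 'I_N, 'M[tube C p]_(ucols I n))
  (hsvd : forall n : 'I_N, is_tSVD (c *: W) (unfold I A n) (U n) (Sg n) (V n)) :
  let M := c *: W in
  let Ubar := fun n : 'I_N => firstcols (I' n) (U n) in
  let St := tmodes M A (fun n => tH M (Ubar n)) in
  let Ahat := tmodes M St Ubar in
  let bound := sqrtC (\sum_(n < N) \sum_(I' n <= i < trank (Sg n)) tsigma (Sg n) i ^+ 2) in
  tnorm I (fun x => A x - Ahat x) <= bound /\
  forall (S : tensor C p N) (Wn : forall n : 'I_N, 'M[tube C p]_(I n, I' n)),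
    (forall n, tmul M (tH M (Wn n)) (Wn n) = tI M (I' n)) ->
    bound <= sqrtC N%:R * tnorm I (fun x => A x - tmodes M S Wn x).
Proof.
move=> M Ubar St Ahat bound.
have c2inv_ge0 : 0 <= (`|c| ^+ 2)^-1 by rewrite invr_ge0 exprn_ge0.
have scaled_nneg (f : 'I_p -> C) : (forall k, 0 <= f k) -> (`|c| ^+ 2)^-1 * \sum_k f k \is Num.nneg.
  by move=> f_ge0; rewrite nnegrE mulr_ge0 // sumr_ge0.
have error_nneg (X : tensor C p N) := scaled_nneg _ (fun k => sfrob2_ge0 I (tslice M X k)).
have tail_nneg := scaled_nneg _ (fun k => sumr_ge0 _ (fun n _ => mode_tail_ge0 c W I' Sg n k)).
rewrite /bound (tsigma_tail_sum hc hW I' hsvd) (tnorm_slices hc hW); split.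
  rewrite ler_sqrtC ?error_nneg ?tail_nneg // ler_wpM2l // ler_sum // => k _.
  exact: hosvd_slice_error_le.
move=> S Wn Wn_iso; rewrite (tnorm_slices hc hW) -sqrtCM ?nnegrE ?ler0n -?nnegrE ?error_nneg //.
rewrite ler_sqrtC ?tail_nneg //; last by rewrite nnegrE mulr_ge0 ?ler0n // -nnegrE.
rewrite mulrCA ler_wpM2l // mulr_sumr ler_sum // => k _.
rewrite mulr_natl -[in X in _ *+ X](card_ord N) -sumr_const ler_sum // => n _.
exact: mode_tail_le_slice_error.
Qed.
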